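(* Let $\Gamma_C=(\mathcal{S},\mathcal{P},\mathcal{E})$ be a correspondence graph with body graph $\Gamma_B$, and let $\mathbf{x},\mathbf{y}:\mathcal{S}\to\mathbb{R}^d$. The node-patch frameworks $(\Gamma_C,\mathbf{x})$ and $(\Gamma_C,\mathbf{y})$ are equivalent if and only if the frameworks $(\Gamma_B,\mathbf{x})$ and $(\Gamma_B,\mathbf{y})$ are equivalent.
   Context: $\mathcal{S}=\{1,\dots,N\}$, $\mathcal{P}=\{P_1,\dots,P_M\}$ with $P_i\subseteq\mathcal{S}$, and $(k,i)\in\mathcal{E}$ iff $k\in P_i$. The body graph $\Gamma_B$ has vertex set $\mathcal{S}$ and an edge between $k\ne l$ iff $k,l\in P_i$ for some $i$. A rigid transform is $x\mapsto Qx+t$ with $Q$ orthogonal. Node-patch frameworks $(\Gamma_C,\mathbf{x})$, $(\Gamma_C,\mathbf{y})$ are equivalent if there exist rigid transforms $\mathcal{Q}_1,\dots,\mathcal{Q}_M$ with $\mathbf{x}(k)=\mathcal{Q}_i\mathbf{y}(k)$ for all $(k,i)\in\mathcal{E}$. Frameworks $(G,\mathbf{p})$, $(G,\mathbf{q})$ of a graph $G$ are equivalent if $\|\mathbf{p}(u)-\mathbf{p}(v)\|=\|\mathbf{q}(u)-\mathbf{q}(v)\|$ for every edge $(u,v)$ of $G$ (Euclidean norm). *)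

From HB Require Import structures.
From mathcomp Require Import all_boot all_order all_algebra.
From mathcomp Require Import reals.
Set Implicit Arguments. Unset Strict Implicit. Unset Printing Implicit Defensive.
Import Order.TTheory GRing.Theory Num.Theory.
Local Open Scope ring_scope.

Definition enorm (R : realType) (d : nat) (v : 'cV[R]_d) : R :=
  Num.sqrt (\sum_(i < d) v i 0 ^+ 2).

Definition orthogonal_mx (R : realType) (d : nat) (Q : 'M[R]_d) : Prop :=
  Q^T *m Q = 1%:M.

Record rigid (R : realType) (d : nat) := Rigid {
  rigid_Q : 'M[R]_d;
  rigid_t : 'cV[R]_d;
  rigid_orth : orthogonal_mx rigid_Q }.

Definition apply_rigid (R : realType) (d : nat) (T : rigid R d) (v : 'cV[R]_d)
  : 'cV[R]_d := rigid_Q T *m v + rigid_t T.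

(* Correspondence graph: nodes S = 'I_N, patches P : 'I_M -> {set 'I_N};
   (k, i) in E iff k \in P i. *)
Definition in_E (N M : nat) (P : 'I_M -> {set 'I_N}) (k : 'I_N) (i : 'I_M) : bool :=
  k \in P i.

Definition body_edge (N M : nat) (P : 'I_M -> {set 'I_N}) (k l : 'I_N) : Prop :=
  k != l /\ exists i : 'I_M, (k \in P i) && (l \in P i).

Definition np_equivalent (R : realType) (d N M : nat) (P : 'I_M -> {set 'I_N})
  (x y : 'I_N -> 'cV[R]_d) : Prop :=
  exists Qs : 'I_M -> rigid R d,
    forall (k : 'I_N) (i : 'I_M), in_E P k i -> x k = apply_rigid (Qs i) (y k).

Definition fw_equivalent (R : realType) (d N : nat) (edge : 'I_N -> 'I_N -> Prop)
  (p q : 'I_N -> 'cV[R]_d) : Prop :=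
  forall u v : 'I_N, edge u v -> enorm (p u - p v) = enorm (q u - q v).

(* Rigid motions preserve distances, which gives one direction.  Conversely,
   on a single patch the pairwise distances of x and y agree; after moving a
   base point of the patch to the origin, polarization shows that the two
   families of difference vectors have the same Gram matrix, and two finite
   families with the same Gram matrix differ by an orthogonal map, built one
   vector at a time by composing Householder reflections.  This yields one
   rigid motion per patch. *)
From mathcomp Require Import all_boot all_order all_algebra.
From mathcomp Require Import reals.
From mathcomp Require Import ring.
Set Implicit Arguments. Unset Strict Implicit. Unset Printing Implicit Defensive.
Import Order.TTheory GRing.Theory Num.Theory.
Local Open Scope ring_scope.

Section InnerProduct.
Variables (R : realType) (d : nat).
Implicit Types (u v w : 'cV[R]_d) (Q : 'M[R]_d).

Definition dotv u v : R := (u^T *m v) 0 0.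

Lemma dotvC u v : dotv u v = dotv v u.
Proof. by rewrite /dotv -{1}(trmxK v) -trmx_mul mxE. Qed.

Lemma dotvBl u v w : dotv (u - v) w = dotv u w - dotv v w.
Proof. by rewrite /dotv (raddfB (@trmx R d 1)) mulmxBl !mxE. Qed.

Lemma dotvBr u v w : dotv w (u - v) = dotv w u - dotv w v.
Proof. by rewrite /dotv mulmxBr !mxE. Qed.

Lemma dotv_polar u v :
  dotv u v = (dotv u u + dotv v v - dotv (u - v) (u - v)) / 2.
Proof. by rewrite !dotvBl !dotvBr (dotvC v u); field. Qed.

Lemma dotvvE u : dotv u u = \sum_(i < d) u i 0 ^+ 2.
Proof. by rewrite /dotv mxE; apply: eq_bigr => i _; rewrite mxE expr2. Qed.

Lemma dotvv_ge0 u : 0 <= dotv u u.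
Proof. by rewrite dotvvE; apply: sumr_ge0 => i _; exact: sqr_ge0. Qed.

Lemma dotvv_eq0 u : (dotv u u == 0) = (u == 0).
Proof.
apply/idP/eqP => [|->]; last by rewrite /dotv mulmx0 mxE.
rewrite dotvvE psumr_eq0 => [/allP u0|i _]; last exact: sqr_ge0.
apply/matrixP => i j; rewrite (ord1 j) mxE.
by apply/eqP; rewrite -sqrf_eq0; exact: u0 (mem_index_enum _).
Qed.

Lemma enormE u : enorm u = Num.sqrt (dotv u u).
Proof. by rewrite dotvvE. Qed.

Lemma enorm_eq u v : (enorm u = enorm v) <-> (dotv u u = dotv v v).
Proof.
by rewrite !enormE; split => [/eqP|->//]; rewrite eqr_sqrt ?dotvv_ge0 // => /eqP.
Qed.

Lemma dotv_orth Q u v : orthogonal_mx Q -> dotv (Q *m u) (Q *m v) = dotv u v.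
Proof. by move=> oQ; rewrite /dotv trmx_mul mulmxA -(mulmxA u^T) oQ mulmx1. Qed.

Lemma mul_outer_mx u v : u *m u^T *m v = dotv u v *: u.
Proof. by rewrite -mulmxA [u^T *m v]mx11_scalar mul_mx_scalar. Qed.

End InnerProduct.

Section Orthogonal.
Variables (R : realType) (d : nat).
Implicit Types (u v w : 'cV[R]_d) (Q : 'M[R]_d).

Lemma orthogonal_mx1 : orthogonal_mx (1%:M : 'M[R]_d).
Proof. by rewrite /orthogonal_mx trmx1 mul1mx. Qed.

Lemma orthogonal_mxM Q1 Q2 :
  orthogonal_mx Q1 -> orthogonal_mx Q2 -> orthogonal_mx (Q1 *m Q2).
Proof.
by move=> o1 o2; rewrite /orthogonal_mx trmx_mul -mulmxA (mulmxA Q1^T) o1 mul1mx.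
Qed.

Definition householder w : 'M[R]_d := 1%:M - (2 / dotv w w) *: (w *m w^T).

Lemma householder_perp w v : dotv w v = 0 -> householder w *m v = v.
Proof.
move=> wv0; rewrite mulmxBl mul1mx -scalemxAl mul_outer_mx wv0.
by rewrite scale0r scaler0 subr0.
Qed.

Lemma orthogonal_householder w : w != 0 -> orthogonal_mx (householder w).
Proof.
rewrite -dotvv_eq0 => ww0.
have symH : (householder w)^T = householder w.
  by rewrite linearB /= linearZ /= trmx_mul trmxK trmx1.
have outer2 : w *m w^T *m (w *m w^T) = dotv w w *: (w *m w^T).
  by rewrite mulmxA mul_outer_mx scalemxAl.
rewrite /orthogonal_mx symH mulmxBl mul1mx mulmxBr mulmx1 -!scalemxAl.
rewrite -scalemxAr outer2 !scalerA.
have -> : 2 / dotv w w * (2 / dotv w w) * dotv w w = 2 / dotv w w + 2 / dotv w w.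
  by field.
by rewrite scalerDl opprB addrK subrK.
Qed.

Lemma householder_swap u v :
  dotv u u = dotv v v -> u != v -> householder (u - v) *m u = v.
Proof.
move=> uv; rewrite -subr_eq0 -dotvv_eq0 => ww0.
have ww : dotv (u - v) (u - v) = 2 * dotv (u - v) u.
  by rewrite !dotvBl !dotvBr (dotvC v u) uv; ring.
rewrite mulmxBl mul1mx -scalemxAl mul_outer_mx scalerA.
have -> : 2 / dotv (u - v) (u - v) * dotv (u - v) u = 1.
  by move: ww0; rewrite ww => u0; field; apply: contra u0 => /eqP->; rewrite mulr0.
by rewrite scale1r opprB addrC subrK.
Qed.

Lemma orthogonal_of_dotv (I : eqType) (s : seq I) (uu vv : I -> 'cV[R]_d) :
  {in s &, forall k l, dotv (uu k) (uu l) = dotv (vv k) (vv l)} ->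
  exists2 Q, orthogonal_mx Q & {in s, forall k, Q *m vv k = uu k}.
Proof.
elim: s => [|a s IHs] gram; first by exists 1%:M; [exact: orthogonal_mx1 |].
have [|Q oQ Qs] := IHs.
  by move=> k l ks ls; apply: gram; rewrite inE ?ks ?ls orbT.
pose c := Q *m vv a.
have gram_c k : k \in s -> dotv c (uu k) = dotv (uu a) (uu k).
  by move=> ks; rewrite -[in LHS](Qs k ks) dotv_orth // gram ?inE ?eqxx ?ks ?orbT.
have norm_c : dotv c c = dotv (uu a) (uu a) by rewrite dotv_orth // gram ?inE ?eqxx.
have [ca|nca] := eqVneq c (uu a).
  by exists Q => // k; rewrite inE => /predU1P[->|]; [exact: ca | exact: Qs].
exists (householder (c - uu a) *m Q).
  by apply: orthogonal_mxM => //; apply: orthogonal_householder; rewrite subr_eq0.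
move=> k; rewrite inE -mulmxA => /predU1P[->|ks].
  exact: householder_swap.
by rewrite Qs // householder_perp // dotvBl gram_c // subrr.
Qed.

End Orthogonal.

Section Rigid.
Variables (R : realType) (d : nat).

Definition rigid1 : rigid R d := Rigid 0 (@orthogonal_mx1 R d).

Lemma apply_rigidB (T : rigid R d) u v :
  apply_rigid T u - apply_rigid T v = rigid_Q T *m (u - v).
Proof. by rewrite /apply_rigid mulmxBr opprD addrACA subrr addr0. Qed.

Lemma enorm_apply_rigidB (T : rigid R d) u v :
  enorm (apply_rigid T u - apply_rigid T v) = enorm (u - v).
Proof. by rewrite apply_rigidB enorm_eq dotv_orth //; exact: rigid_orth. Qed.

Lemma rigid_of_enormB (I : finType) (A : {set I}) (x y : I -> 'cV[R]_d) :
  {in A &, forall k l, enorm (x k - x l) = enorm (y k - y l)} ->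
  exists T : rigid R d, {in A, forall k, x k = apply_rigid T (y k)}.
Proof.
move=> dist; have [->|[k0 k0A]] := set_0Vmem A.
  by exists rigid1 => k; rewrite inE.
have sqdist k l : k \in A -> l \in A ->
    dotv (x k - x l) (x k - x l) = dotv (y k - y l) (y k - y l).
  by move=> kA lA; apply/enorm_eq; exact: dist.
have gram : {in enum A &, forall k l,
    dotv (x k - x k0) (x l - x k0) = dotv (y k - y k0) (y l - y k0)}.
  move=> k l; rewrite !mem_enum => kA lA.
  by rewrite dotv_polar [RHS]dotv_polar !opprB !addrA !subrK !sqdist.
have [Q oQ Qs] := orthogonal_of_dotv gram.
exists (Rigid (x k0 - Q *m y k0) oQ) => k kA.
have := Qs k; rewrite mem_enum mulmxBr => /(_ kA) Qk.
by rewrite /apply_rigid /= addrCA Qk addrC subrK.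
Qed.

End Rigid.

Theorem proposition6 (R : realType) (d N M : nat) (P : 'I_M -> {set 'I_N})
  (x y : 'I_N -> 'cV[R]_d) :
  np_equivalent P x y <-> fw_equivalent (body_edge P) x y.
Proof.
split=> [[Qs xQy] k l [_ [i /andP[ki li]]] | dist].
  by rewrite (xQy k i ki) (xQy l i li) enorm_apply_rigidB.
have patch i : exists T : rigid R d, forall k, in_E P k i -> x k = apply_rigid T (y k).
  apply: rigid_of_enormB => k l ki li.
  have [->|kl] := eqVneq k l; first by rewrite !subrr.
  by apply: dist; split; last by exists i; rewrite ki li.
by have [Qs xQy] := fin_all_exists patch; exists Qs => k i; exact: xQy.
Qed.
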